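(* Let $G,G'$ be well-formed canonical global types (possibly containing in-transit constructs). Then for every label $l$ and every role $s$: $G\xrightarrow{l}G'$ if and only if $\mathrm{enc}_s(G)\xrightarrow{\mathrm{enc}_s(l)}\mathrm{enc}_s(G')$.
   Context: Global types: $G::=\mathsf{end}\mid t\mid\mu t.G\mid p\to q:\{l_i:G_i\}_{i\in I}\mid p\to q\ \mathrm{via}\ s:\{l_i:G_i\}_{i\in I}$ plus runtime constructs $p\rightsquigarrow q:j\{l_i:G_i\}$ ($l_j$ sent by $p$, not yet received by $q$) and $p\rightsquigarrow q\ \mathrm{via}\ s:j\{l_i:G_i\}$ ($l_j$ sent by $p$ to router $s$, not yet routed to $q$); $I\neq\emptyset$, distinct labels, $p\neq q$ (and $p,q,s$ pairwise distinct when routed), recursion contractive and equi-recursive. Canonical = no routed constructs. Well-formed = projection onto every participant is defined (standard MPST projection with merging). Labels: $pq!j$, $pq?j$, $s{:}(pq!j)$, $s{:}(pq?j)$; subject of $pq!j$, $s{:}(pq!j)$ is $p$; of $pq?j$, $s{:}(pq?j)$ is $q$. Global LTS: (Gr1) $p\to q:\{l_i:G_i\}\xrightarrow{pq!j}p\rightsquigarrow q:j\{l_i:G_i\}$; (Gr2) $p\rightsquigarrow q:j\{l_i:G_i\}\xrightarrow{pq?j}G_j$; (Gr3) $\mu t.G\xrightarrow{l}G'$ if $G[\mu t.G/t]\xrightarrow{l}G'$; (Gr4) if $G_i\xrightarrow{l}G'_i$ for all $i$ and $\mathrm{subj}(l)\notin\{p,q\}$ then $p\to q:\{l_i:G_i\}\xrightarrow{l}p\to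 q:\{l_i:G'_i\}$; (Gr5) if $G_j\xrightarrow{l}G'_j$, $\mathrm{subj}(l)\neq q$, $G'_i=G_i$ ($i\neq j$), then $p\rightsquigarrow q:j\{l_i:G_i\}\xrightarrow{l}p\rightsquigarrow q:j\{l_i:G'_i\}$; (Gr6) $p\to q\ \mathrm{via}\ s:\{l_i:G_i\}\xrightarrow{s:(pq!j)}p\rightsquigarrow q\ \mathrm{via}\ s:j\{l_i:G_i\}$; (Gr7) $p\rightsquigarrow q\ \mathrm{via}\ s:j\{l_i:G_i\}\xrightarrow{s:(pq?j)}G_j$; (Gr8),(Gr9) as (Gr4),(Gr5) for the routed constructs. Encoding $\mathrm{enc}_s$: identity on $\mathsf{end}$, $t$; $\mathrm{enc}_s(\mu t.G)=\mu t.\mathrm{enc}_s(G)$; $\mathrm{enc}_s(p\to q:\{l_i:G_i\})$ is $p\to q:\{l_i:\mathrm{enc}_s(G_i)\}$ if $s\in\{p,q\}$ and $p\to q\ \mathrm{via}\ s:\{l_i:\mathrm{enc}_s(G_i)\}$ otherwise; likewise $\mathrm{enc}_s(p\rightsquigarrow q:j\{l_i:G_i\})$ is $p\rightsquigarrow q:j\{l_i:\mathrm{enc}_s(G_i)\}$ if $s\in\{p,q\}$ and $p\rightsquigarrow q\ \mathrm{via}\ s:j\{l_i:\mathrm{enc}_s(G_i)\}$ otherwise. On labels: $\mathrm{enc}_s(pq!j)=s{:}(pq!j)$ and $\mathrm{enc}_s(pq?j)=s{:}(pq?j)$ if $s\notin\{p,q\}$, and $\mathrm{enc}_s(l)=l$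 otherwise. *)

From mathcomp Require Import all_boot.
Set Implicit Arguments.
Unset Strict Implicit.
Unset Printing Implicit Defensive.

(* A branch {l_i : G_i}_{i in I} is a list of (label index, continuation);
   the label l_i is identified with its index i, so the action pq!j
   means "label l_j". *)
Definition role := nat.
Definition tvar := nat.
Definition lab := nat.

Inductive gtype : Type :=
| GEnd : gtype
| GVar : tvar -> gtype
| GRec : tvar -> gtype -> gtype
| GMsg : role -> role -> seq (lab * gtype) -> gtype
| GRMsg : role -> role -> role -> seq (lab * gtype) -> gtype        (* p -> q via s : {..} *)
| GTr : role -> role -> lab -> seq (lab * gtype) -> gtype           (* p ~> q : j {..} *)
| GRTr : role -> role -> role -> lab -> seq (lab * gtype) -> gtype. (* p ~> q via s : j {..} *)

Definition keys {A : Type} (bs : seq (lab * A)) : seq lab := map fst bs.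

Fixpoint lookup {A : Type} (k : lab) (bs : seq (lab * A)) : option A :=
  match bs with
  | [::] => None
  | (k', x) :: bs' => if k == k' then Some x else lookup k bs'
  end.

Definition gnth (bs : seq (lab * gtype)) (i : nat) : lab * gtype := nth (0, GEnd) bs i.

(* capture-naive substitution G[U/t] *)
Fixpoint subst (t : tvar) (U : gtype) (G : gtype) : gtype :=
  match G with
  | GEnd => GEnd
  | GVar t' => if t' == t then U else GVar t'
  | GRec t' G1 => if t' == t then GRec t' G1 else GRec t' (subst t U G1)
  | GMsg p q bs => GMsg p q (map (fun b => (b.1, subst t U b.2)) bs)
  | GRMsg p q s bs => GRMsg p q s (map (fun b => (b.1, subst t U b.2)) bs)
  | GTr p q j bs => GTr p q j (map (fun b => (b.1, subst t U b.2)) bs)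
  | GRTr p q s j bs => GRTr p q s j (map (fun b => (b.1, subst t U b.2)) bs)
  end.

Fixpoint fv (G : gtype) : seq tvar :=
  match G with
  | GEnd => [::]
  | GVar t => [:: t]
  | GRec t G1 => filter (fun x => x != t) (fv G1)
  | GMsg _ _ bs | GRMsg _ _ _ bs | GTr _ _ _ bs | GRTr _ _ _ _ bs =>
      flatten (map (fun b => fv b.2) bs)
  end.

Fixpoint roles (G : gtype) : seq role :=
  match G with
  | GEnd | GVar _ => [::]
  | GRec _ G1 => roles G1
  | GMsg p q bs | GTr p q _ bs => p :: q :: flatten (map (fun b => roles b.2) bs)
  | GRMsg p q s bs | GRTr p q s _ bs =>
      p :: q :: s :: flatten (map (fun b => roles b.2) bs)
  end.

Fixpoint canonical (G : gtype) : bool :=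
  match G with
  | GEnd | GVar _ => true
  | GRec _ G1 => canonical G1
  | GMsg _ _ bs | GTr _ _ _ bs => all (fun b => canonical b.2) bs
  | GRMsg _ _ _ _ | GRTr _ _ _ _ _ => false
  end.

Fixpoint unguarded_var (G : gtype) : bool :=
  match G with
  | GVar _ => true
  | GRec _ G1 => unguarded_var G1
  | _ => false
  end.

Fixpoint global_type (G : gtype) : bool :=
  match G with
  | GEnd | GVar _ => true
  | GRec _ G1 => ~~ unguarded_var G1 && global_type G1
  | GMsg p q bs =>
      [&& p != q, 0 < size bs, uniq (keys bs) & all (fun b => global_type b.2) bs]
  | GRMsg p q s bs =>
      [&& uniq [:: p; q; s], 0 < size bs, uniq (keys bs) & all (fun b => global_type b.2) bs]
  | GTr p q j bs =>
      [&& p != q, j \in keys bs, uniq (keys bs) & all (fun b => global_type b.2) bs]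
  | GRTr p q s j bs =>
      [&& uniq [:: p; q; s], j \in keys bs, uniq (keys bs) & all (fun b => global_type b.2) bs]
  end.

Inductive ltype : Type :=
| LEnd : ltype
| LVar : tvar -> ltype
| LRec : tvar -> ltype -> ltype
| LSend : role -> seq (lab * ltype) -> ltype
| LRecv : role -> seq (lab * ltype) -> ltype.

(* full merging *)
Inductive lmerge : ltype -> ltype -> ltype -> Prop :=
| lm_end : lmerge LEnd LEnd LEnd
| lm_var t : lmerge (LVar t) (LVar t) (LVar t)
| lm_rec t T1 T2 T3 : lmerge T1 T2 T3 -> lmerge (LRec t T1) (LRec t T2) (LRec t T3)
| lm_send q bs1 bs2 bs3 :
    uniq (keys bs3) ->
    (forall k, (k \in keys bs1) = (k \in keys bs3)) ->
    (forall k, (k \in keys bs2) = (k \in keys bs3)) ->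
    (forall k T1 T2 T3, lookup k bs1 = Some T1 -> lookup k bs2 = Some T2 ->
        lookup k bs3 = Some T3 -> lmerge T1 T2 T3) ->
    lmerge (LSend q bs1) (LSend q bs2) (LSend q bs3)
| lm_recv p bs1 bs2 bs3 :
    uniq (keys bs3) ->
    (forall k, (k \in keys bs3) = (k \in keys bs1) || (k \in keys bs2)) ->
    (forall k T1 T2 T3, lookup k bs1 = Some T1 -> lookup k bs2 = Some T2 ->
        lookup k bs3 = Some T3 -> lmerge T1 T2 T3) ->
    (forall k T1, lookup k bs1 = Some T1 -> lookup k bs2 = None -> lookup k bs3 = Some T1) ->
    (forall k T2, lookup k bs1 = None -> lookup k bs2 = Some T2 -> lookup k bs3 = Some T2) ->
    lmerge (LRecv p bs1) (LRecv p bs2) (LRecv p bs3).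

Inductive merge_all : seq ltype -> ltype -> Prop :=
| ma_one T : merge_all [:: T] T
| ma_cons T Ts U V : merge_all Ts U -> lmerge T U V -> merge_all (T :: Ts) V.

(* Projection G |` r = T (a partial function, as a relation).  Routed
   constructs have no projection rule: well-formedness is only used for
   canonical global types. *)
Inductive proj : gtype -> role -> ltype -> Prop :=
| pj_end r : proj GEnd r LEnd
| pj_var r t : proj (GVar t) r (LVar t)
| pj_rec_in r t G T :
    (r \in roles G) || (fv (GRec t G) != [::]) ->
    proj G r T -> proj (GRec t G) r (LRec t T)
| pj_rec_out r t G :
    ~~ ((r \in roles G) || (fv (GRec t G) != [::])) -> proj (GRec t G) r LEnd
| pj_msg_p r p q bs Ts :
    r = p ->
    size Ts = size bs -> (forall i, i < size bs -> proj (gnth bs i).2 r (nth LEnd Ts i)) ->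
    proj (GMsg p q bs) r (LSend q (zip (keys bs) Ts))
| pj_msg_q r p q bs Ts :
    r = q ->
    size Ts = size bs -> (forall i, i < size bs -> proj (gnth bs i).2 r (nth LEnd Ts i)) ->
    proj (GMsg p q bs) r (LRecv p (zip (keys bs) Ts))
| pj_msg_other r p q bs Ts T :
    r <> p -> r <> q ->
    size Ts = size bs -> (forall i, i < size bs -> proj (gnth bs i).2 r (nth LEnd Ts i)) ->
    merge_all Ts T ->
    proj (GMsg p q bs) r T
| pj_tr_p r p q j bs Gj T :
    r = p -> lookup j bs = Some Gj -> proj Gj r T ->
    proj (GTr p q j bs) r T
| pj_tr_q r p q j bs Ts :
    r = q ->
    size Ts = size bs -> (forall i, i < size bs -> proj (gnth bs i).2 r (nth LEnd Ts i)) ->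
    proj (GTr p q j bs) r (LRecv p (zip (keys bs) Ts))
| pj_tr_other r p q j bs Ts T :
    r <> p -> r <> q ->
    size Ts = size bs -> (forall i, i < size bs -> proj (gnth bs i).2 r (nth LEnd Ts i)) ->
    merge_all Ts T ->
    proj (GTr p q j bs) r T.

Definition well_formed (G : gtype) : Prop :=
  forall r, r \in roles G -> exists T, proj G r T.

Inductive glabel : Type :=
| LSnd : role -> role -> lab -> glabel
| LRcv : role -> role -> lab -> glabel
| LRSnd : role -> role -> role -> lab -> glabel       (* s:(pq!j), args s p q j *)
| LRRcv : role -> role -> role -> lab -> glabel.      (* s:(pq?j), args s p q j *)

Definition subj (l : glabel) : role :=
  match l with
  | LSnd p _ _ => p
  | LRcv _ q _ => q
  | LRSnd _ p _ _ => p
  | LRRcv _ _ q _ => q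
  end.

Definition canonical_label (l : glabel) : bool :=
  match l with LSnd _ _ _ | LRcv _ _ _ => true | _ => false end.

Inductive step : gtype -> glabel -> gtype -> Prop :=
| Gr1 p q bs j : j \in keys bs ->
    step (GMsg p q bs) (LSnd p q j) (GTr p q j bs)
| Gr2 p q j bs Gj : lookup j bs = Some Gj ->
    step (GTr p q j bs) (LRcv p q j) Gj
| Gr3 t G l G' : step (subst t (GRec t G) G) l G' ->
    step (GRec t G) l G'
| Gr4 p q bs bs' l :
    keys bs' = keys bs ->
    (forall i, i < size bs -> step (gnth bs i).2 l (gnth bs' i).2) ->
    subj l \notin [:: p; q] ->
    step (GMsg p q bs) l (GMsg p q bs')
| Gr5 p q j bs bs' l :
    j \in keys bs -> keys bs' = keys bs ->
    (forall i, i < size bs -> (gnth bs i).1 = j -> step (gnth bs i).2 l (gnth bs' i).2) ->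
    (forall i, i < size bs -> (gnth bs i).1 <> j -> (gnth bs' i).2 = (gnth bs i).2) ->
    subj l != q ->
    step (GTr p q j bs) l (GTr p q j bs')
| Gr6 p q s bs j : j \in keys bs ->
    step (GRMsg p q s bs) (LRSnd s p q j) (GRTr p q s j bs)
| Gr7 p q s j bs Gj : lookup j bs = Some Gj ->
    step (GRTr p q s j bs) (LRRcv s p q j) Gj
| Gr8 p q s bs bs' l :
    keys bs' = keys bs ->
    (forall i, i < size bs -> step (gnth bs i).2 l (gnth bs' i).2) ->
    subj l \notin [:: p; q] ->
    step (GRMsg p q s bs) l (GRMsg p q s bs')
| Gr9 p q s j bs bs' l :
    j \in keys bs -> keys bs' = keys bs ->
    (forall i, i < size bs -> (gnth bs i).1 = j -> step (gnth bs i).2 l (gnth bs' i).2) ->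
    (forall i, i < size bs -> (gnth bs i).1 <> j -> (gnth bs' i).2 = (gnth bs i).2) ->
    subj l != q ->
    step (GRTr p q s j bs) l (GRTr p q s j bs').

Fixpoint enc (s : role) (G : gtype) : gtype :=
  match G with
  | GEnd => GEnd
  | GVar t => GVar t
  | GRec t G1 => GRec t (enc s G1)
  | GMsg p q bs =>
      let bs' := map (fun b => (b.1, enc s b.2)) bs in
      if (s == p) || (s == q) then GMsg p q bs' else GRMsg p q s bs'
  | GTr p q j bs =>
      let bs' := map (fun b => (b.1, enc s b.2)) bs in
      if (s == p) || (s == q) then GTr p q j bs' else GRTr p q s j bs'
  (* enc_s is only specified on canonical types; routed constructs are
     left in place (continuations encoded) *)
  | GRMsg p q s' bs => GRMsg p q s' (map (fun b => (b.1, enc s b.2)) bs)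
  | GRTr p q s' j bs => GRTr p q s' j (map (fun b => (b.1, enc s b.2)) bs)
  end.

Definition enc_label (s : role) (l : glabel) : glabel :=
  match l with
  | LSnd p q j => if (s == p) || (s == q) then l else LRSnd s p q j
  | LRcv p q j => if (s == p) || (s == q) then l else LRRcv s p q j
  | _ => l
  end.

(* The rules of the global LTS for routed and direct messages coincide up to
   the router annotation, so reassigning the routers of all messages (and of
   the labels accordingly) maps transitions to transitions.  The encoding
   enc_s is such a reassignment, which gives one direction.  Erasing every
   router is another one, and it is a left inverse of enc_s on canonical types
   and labels, which gives the converse. *)
From mathcomp Require Import all_boot.
From Stdlib Require List.

Set Implicit Arguments.
Unset Strict Implicit.
Unset Printing Implicit Defensive.

Section NestedInduction.
Variable P : gtype -> Prop.
Hypothesis HEnd : P GEnd.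
Hypothesis HVar : forall t, P (GVar t).
Hypothesis HRec : forall t G, P G -> P (GRec t G).
Hypothesis HMsg : forall p q bs, (forall b, List.In b bs -> P b.2) -> P (GMsg p q bs).
Hypothesis HRMsg : forall p q r bs, (forall b, List.In b bs -> P b.2) -> P (GRMsg p q r bs).
Hypothesis HTr : forall p q j bs, (forall b, List.In b bs -> P b.2) -> P (GTr p q j bs).
Hypothesis HRTr :
  forall p q r j bs, (forall b, List.In b bs -> P b.2) -> P (GRTr p q r j bs).

Fixpoint gtype_nested_ind (G : gtype) : P G :=
  let fix branches (bs : seq (lab * gtype)) : forall b, List.In b bs -> P b.2 :=
    match bs return forall b, List.In b bs -> P b.2 with
    | [::] => fun b H => False_ind _ H
    | b0 :: bs' => fun b H =>
        match H with
        | or_introl e => eq_ind b0 (fun b => P b.2) (gtype_nested_ind b0.2) b e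
        | or_intror H' => branches bs' b H'
        end
    end in
  match G with
  | GEnd => HEnd
  | GVar t => HVar t
  | GRec t G1 => HRec t (gtype_nested_ind G1)
  | GMsg p q bs => HMsg p q (branches bs)
  | GRMsg p q r bs => HRMsg p q r (branches bs)
  | GTr p q j bs => HTr p q j (branches bs)
  | GRTr p q r j bs => HRTr p q r j (branches bs)
  end.
End NestedInduction.

Lemma all_In (A : Type) (a : pred A) (s : seq A) x : all a s -> List.In x s -> a x.
Proof. by elim: s => //= y s IH /andP[ay /IH ax] [<-|/ax]. Qed.

Local Notation map_br h bs := (map (fun b : lab * gtype => (b.1, h b.2)) bs).

Lemma keys_map_br (h : gtype -> gtype) bs : keys (map_br h bs) = keys bs.
Proof. by rewrite /keys -map_comp. Qed.

Lemma lookup_map_br (h : gtype -> gtype) j bs : lookup j (map_br h bs) = omap h (lookup j bs).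
Proof. by elim: bs => [|[k G] bs IH] //=; case: eqP. Qed.

Lemma gnth_map_br (h : gtype -> gtype) bs i :
  h GEnd = GEnd -> gnth (map_br h bs) i = ((gnth bs i).1, h (gnth bs i).2).
Proof. by move=> h_end; rewrite /gnth; elim: bs i => [|b bs IH] [|i] //=; rewrite h_end. Qed.

Lemma map_br_comp (h k : gtype -> gtype) bs :
  map_br h (map_br k bs) = map_br (h \o k) bs.
Proof. by rewrite -map_comp. Qed.

Lemma eq_in_map_br (h k : gtype -> gtype) bs :
  (forall b, List.In b bs -> h b.2 = k b.2) -> map_br h bs = map_br k bs.
Proof. by move=> eq_hk; apply: List.map_ext_in => b /eq_hk ->. Qed.

(* A routing decides, for each message from p to q currently sent directly
   ([None]) or through a router ([Some r]), how it is sent afterwards. *)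
Definition routing := role -> role -> option role -> option role.

Definition msg_node p q (o : option role) bs :=
  if o is Some r then GRMsg p q r bs else GMsg p q bs.

Definition tr_node p q (o : option role) j bs :=
  if o is Some r then GRTr p q r j bs else GTr p q j bs.

Definition snd_label p q (o : option role) j :=
  if o is Some r then LRSnd r p q j else LSnd p q j.

Definition rcv_label p q (o : option role) j :=
  if o is Some r then LRRcv r p q j else LRcv p q j.

Fixpoint reroute (f : routing) (G : gtype) : gtype :=
  match G with
  | GEnd => GEnd
  | GVar t => GVar t
  | GRec t G1 => GRec t (reroute f G1)
  | GMsg p q bs => msg_node p q (f p q None) (map_br (reroute f) bs)
  | GRMsg p q r bs => msg_node p q (f p q (Some r)) (map_br (reroute f) bs)
  | GTr p q j bs => tr_node p q (f p q None) j (map_br (reroute f) bs)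
  | GRTr p q r j bs => tr_node p q (f p q (Some r)) j (map_br (reroute f) bs)
  end.

Definition reroute_label (f : routing) (l : glabel) : glabel :=
  match l with
  | LSnd p q j => snd_label p q (f p q None) j
  | LRcv p q j => rcv_label p q (f p q None) j
  | LRSnd r p q j => snd_label p q (f p q (Some r)) j
  | LRRcv r p q j => rcv_label p q (f p q (Some r)) j
  end.

Lemma subj_reroute_label f l : subj (reroute_label f l) = subj l.
Proof. by case: l => [p q j|p q j|r p q j|r p q j] /=; case: (f p q _). Qed.

Lemma subst_msg_node t U p q o bs :
  subst t U (msg_node p q o bs) = msg_node p q o (map_br (subst t U) bs).
Proof. by case: o. Qed.

Lemma subst_tr_node t U p q o j bs :
  subst t U (tr_node p q o j bs) = tr_node p q o j (map_br (subst t U) bs).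
Proof. by case: o. Qed.

Lemma reroute_subst f t U G :
  reroute f (subst t U G) = subst t (reroute f U) (reroute f G).
Proof.
elim/gtype_nested_ind: G => //=.
- by move=> t'; case: eqP.
- by move=> t' G IH; case: eqP => //= _; rewrite IH.
all: move=> *; rewrite ?subst_msg_node ?subst_tr_node !map_br_comp; congr (_ _).
all: by apply: eq_in_map_br.
Qed.

Lemma step_msg_node p q o bs j :
  j \in keys bs -> step (msg_node p q o bs) (snd_label p q o j) (tr_node p q o j bs).
Proof. by case: o => [r|]; [apply: Gr6 | apply: Gr1]. Qed.

Lemma step_tr_node p q o j bs Gj :
  lookup j bs = Some Gj -> step (tr_node p q o j bs) (rcv_label p q o j) Gj.
Proof. by case: o => [r|]; [apply: Gr7 | apply: Gr2]. Qed.

Lemma step_msg_node_cong p q o bs bs' l :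
  keys bs' = keys bs ->
  (forall i, i < size bs -> step (gnth bs i).2 l (gnth bs' i).2) ->
  subj l \notin [:: p; q] ->
  step (msg_node p q o bs) l (msg_node p q o bs').
Proof. by case: o => [r|]; [apply: Gr8 | apply: Gr4]. Qed.

Lemma step_tr_node_cong p q o j bs bs' l :
  j \in keys bs -> keys bs' = keys bs ->
  (forall i, i < size bs -> (gnth bs i).1 = j -> step (gnth bs i).2 l (gnth bs' i).2) ->
  (forall i, i < size bs -> (gnth bs i).1 <> j -> (gnth bs' i).2 = (gnth bs i).2) ->
  subj l != q ->
  step (tr_node p q o j bs) l (tr_node p q o j bs').
Proof. by case: o => [r|]; [apply: Gr9 | apply: Gr5]. Qed.

Lemma step_reroute f G l G' :
  step G l G' -> step (reroute f G) (reroute_label f l) (reroute f G').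
Proof.
elim=> {G l G'} /=
  [p q bs j j_in | p q j bs Gj lookup_j | t G l G' _ IH
  | p q bs bs' l keys_eq _ IH subj_l | p q j bs bs' l j_in keys_eq _ IH others_eq subj_l
  | p q r bs j j_in | p q r j bs Gj lookup_j
  | p q r bs bs' l keys_eq _ IH subj_l | p q r j bs bs' l j_in keys_eq _ IH others_eq subj_l].
1,6: by apply: step_msg_node; rewrite keys_map_br.
1,5: by apply: step_tr_node; rewrite lookup_map_br lookup_j.
1: by apply: Gr3; rewrite -[GRec t _]/(reroute f (GRec t G)) -reroute_subst.
1,3: apply: step_msg_node_cong; rewrite ?keys_map_br ?subj_reroute_label // => i.
1,2: by rewrite size_map !gnth_map_br //; apply: IH.
all: apply: step_tr_node_cong; rewrite ?keys_map_br ?subj_reroute_label // => i.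
all: rewrite size_map !gnth_map_br //= => lt_i bs_i; by [apply: IH | rewrite others_eq].
Qed.

Definition enc_routing (s : role) : routing := fun p q o =>
  if o is Some _ then o else if (s == p) || (s == q) then None else Some s.

Definition direct_routing : routing := fun _ _ _ => None.

Lemma enc_reroute s G : enc s G = reroute (enc_routing s) G.
Proof.
elim/gtype_nested_ind: G => //= [t G -> // |||| ] *.
all: rewrite (eq_in_map_br (k := reroute (enc_routing s))) //.
all: by rewrite /enc_routing /=; case: ifP.
Qed.

Lemma enc_label_reroute s l : enc_label s l = reroute_label (enc_routing s) l.
Proof. by case: l => //= p q j; rewrite /enc_routing; case: ifP. Qed.

Lemma reroute_direct_enc s G :
  canonical G -> reroute direct_routing (enc s G) = G.
Proof.
elim/gtype_nested_ind: G => //= [t G IH /IH -> // | p q bs IH | p q j bs IH] can_bs.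
all: have direct_enc_bs : map_br (reroute direct_routing \o enc s) bs = bs
  by rewrite -[RHS]map_id; apply: List.map_ext_in => -[k G] in_bs;
     rewrite /= (IH (k, G)) //; exact: all_In can_bs in_bs.
all: by case: ifP; rewrite /= map_br_comp direct_enc_bs.
Qed.

Lemma reroute_direct_enc_label s l :
  canonical_label l -> reroute_label direct_routing (enc_label s l) = l.
Proof. by case: l => //= p q j _; case: ifP. Qed.

Theorem theorem4p12 (G G' : gtype) (l : glabel) (s : role) :
  global_type G -> global_type G' ->
  canonical G -> canonical G' ->
  well_formed G -> well_formed G' ->
  canonical_label l ->
  step G l G' <-> step (enc s G) (enc_label s l) (enc s G').
Proof.
move=> _ _ can_G can_G' _ _ can_l; split.
  by rewrite !enc_reroute enc_label_reroute; apply: step_reroute.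
move=> /(step_reroute direct_routing).
by rewrite !reroute_direct_enc ?reroute_direct_enc_label.
Qed.
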